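(* Let $p,q$ be distinct odd primes, $G=\mathrm{Gal}(\mathbb{Q}(\zeta_p)/\mathbb{Q})$ and $\theta=\sum_{\tau\in G}n_\tau\tau\in\mathbb{Z}[G]$. Define the formal power series $$F(T)=\prod_{\tau\in G}(1-\tau(\zeta_p)T)^{n_\tau/q}\in\mathbb{Q}(\zeta_p)[[T]],\qquad (1-\tau(\zeta_p)T)^{n_\tau/q}=\sum_{k\ge0}\binom{n_\tau/q}{k}(-\tau(\zeta_p)T)^k .$$ Then: (a) every coefficient of $F$ is of the form $a/q^s$ with $a\in\mathbb{Z}[\zeta_p]$ and $s\ge0$; (b) $F(T)=\sum_{k\ge0}\frac{a_k}{k!\,q^k}T^k$ with $a_k\in\mathbb{Z}[\zeta_p]$ and $a_k\equiv\bigl(-\sum_{\tau\in G}n_\tau\tau(\zeta_p)\bigr)^k\pmod{q\mathbb{Z}[\zeta_p]}$ for all $k$; (c) for $\sigma\in G$ and $t\in\mathbb{C}$ with $|t|<1$ the series $F^\sigma(t)$ converges; moreover, if $0\le n_\tau\le q$ for all $\tau\in G$, then for every $k\ge0$ $$|F^\sigma(t)-F^\sigma_k(t)|\le\left|\binom{-m}{k+1}\right|\frac{|t|^{k+1}}{(1-|t|)^{m+k+1}},\qquad m=\frac1q\sum_{\tau\in G}n_\tau .$$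
   Context: $\zeta_p=e^{2i\pi/p}$; $\binom{r}{k}=r(r-1)\cdots(r-k+1)/k!$ for rational $r$. $F^\sigma$ is the series obtained by applying $\sigma$ to every coefficient of $F$, and $F^\sigma_k$ is the polynomial formed by the terms of $F^\sigma$ of degree at most $k$. *)

From HB Require Import structures.
From mathcomp Require Import all_boot all_order all_algebra.
From mathcomp Require Import all_classical all_reals all_analysis.
From mathcomp Require Import complex.
Unset Printing Implicit Defensive.
Import Order.TTheory GRing.Theory Num.Theory.
Import numFieldNormedType.Exports.
Local Open Scope ring_scope.

(* the complex numbers, as R[i] viewed as a numClosedFieldType
   (this makes the canonical norm topology of MathComp-Analysis available) *)
Definition cplx (R : realType) : numClosedFieldType := R[i].

Definition zeta (R : realType) (p : nat) : cplx R :=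
  Complex (cos (2 * pi / p%:R)) (sin (2 * pi / p%:R)).

Definition binr {F : fieldType} (r : F) (k : nat) : F :=
  (\prod_(i < k) (r - i%:R)) / (k`!)%:R.

Definition inZzeta (R : realType) (p : nat) (x : cplx R) : Prop :=
  exists c : nat -> int, x = \sum_(i < p) (c i)%:~R * zeta R p ^+ i.

(* formal power series over R[i] as coefficient sequences; Cauchy product *)
Definition ps_mul (R : realType) (f g : nat -> cplx R) : nat -> cplx R :=
  fun k => \sum_(i < k.+1) f i * g (k - i)%N.
Definition ps_one (R : realType) : nat -> cplx R := fun k => (k == 0%N)%:R.

(* (1 - c T)^r = sum_k binom(r,k) (-c T)^k *)
Definition binom_series (R : realType) (r c : cplx R) : nat -> cplx R :=
  fun k => binr r k * (- c) ^+ k.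

(* The Galois group G = Gal(Q(zeta_p)/Q) is identified with (Z/pZ)^x:
   a : 'I_p with 0 < a corresponds to tau_a : zeta_p |-> zeta_p^a.
   Fser p q n s is F^sigma for sigma = tau_s (so F = Fser p q n 1):
   prod_{a} (1 - sigma(tau_a(zeta_p)) T)^{n_a/q}, sigma(tau_a zeta) = zeta^(s*a). *)
Definition Fser (R : realType) (p q : nat) (n : 'I_p -> int) (s : nat)
  : nat -> cplx R :=
  \big[ps_mul R/ps_one R]_(a < p | (0 < a)%N)
     binom_series R ((n a)%:~R / q%:R) (zeta R p ^+ (s * a)).

From HB Require Import structures.
From mathcomp Require Import all_boot all_order all_algebra.
From mathcomp Require Import all_classical all_reals all_analysis.
From mathcomp Require Import complex.
From mathcomp Require Import ring lra zify.
Import Order.TTheory GRing.Theory Num.Theory.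
Import numFieldNormedType.Exports.
Local Open Scope ring_scope.

(* F is a product of binomial series (1 - c T)^(n/q), c a root of unity, and the
   k-th coefficient of such a factor is (-c)^k prod_{i<k} (n - i q) / (k! q^k).
   (a) q is invertible modulo the q'-part of k!, so modulo that part
   prod_{i<k} (n - i q) is q^k times a falling factorial, hence divisible by it.
   (b) prod_{i<k} (n - i q) = n^k mod q, so each factor is congruent to
   exp(-n c T / q) in the sense of [exp_congr], and this congruence survives
   Cauchy products because binomial coefficients are integers.
   (c) |binom(r, k)| <= binom(|r| + k - 1, k), so F^sigma is dominated
   coefficientwise by (1 - T)^-M, M = sum |n_tau| / q.  Its partial sums at
   0 <= x < 1 are at most (1 - x)^-M (for rational M, raise them to the q-th
   power to reach an integral exponent), and the tail after k is bounded via
   binom(M + k + i - 1, k + i) <= binom(M + k - 1, k) binom(M + k + i - 1, i). *)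

Definition ffact_step (n : int) (q k : nat) : int := \prod_(i < k) (n - (i * q)%N%:Z).

Lemma dvdz_prodB (m : int) (k : nat) (a b : nat -> int) :
  (forall i, (i < k)%N -> (m %| a i - b i)%Z) ->
  (m %| \prod_(i < k) a i - \prod_(i < k) b i)%Z.
Proof.
elim: k => [|k IHk] dvd_ab; first by rewrite !big_ord0 subrr dvdz0.
rewrite !big_ord_recr /=.
have -> : \prod_(i < k) a i * a k - \prod_(i < k) b i * b k =
  (\prod_(i < k) a i - \prod_(i < k) b i) * a k + \prod_(i < k) b i * (a k - b k).
  by ring.
apply: rpredD; last by apply/dvdz_mull/dvd_ab.
by apply/dvdz_mulr/IHk => i /ltnW /dvd_ab.
Qed.

Lemma dvdz_ffact_stepB (n : int) (q k : nat) :
  (q%:Z %| ffact_step n q k - n ^+ k)%Z.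
Proof.
rewrite /ffact_step -[X in n ^+ X](card_ord k) -prodr_const.
apply: (@dvdz_prodB _ k (fun i => n - (i * q)%N%:Z) (fun=> n)) => i _.
by rewrite addrAC subrr add0r rpredN PoszM dvdz_mull.
Qed.

Lemma fact_dvdz_prod_subn (N k : nat) : ((k`!)%:Z %| \prod_(i < k) (N%:Z - i%:Z))%Z.
Proof.
have [ltNk | lekN] := ltnP N k.
  by rewrite (bigD1 (Ordinal ltNk)) //= subrr mul0r dvdz0.
have -> : \prod_(i < k) (N%:Z - i%:Z) = (N ^_ k)%:Z.
  rewrite ffact_prod rmorph_prod; apply: eq_bigr => i _.
  by rewrite subzn // ltnW // (leq_trans (ltn_ord i)).
by rewrite -bin_ffact PoszM dvdz_mull.
Qed.

Lemma dvdz_ffact_step (m : nat) (n : int) (q k : nat) :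
  coprime m q -> (m %| k`!)%N -> (m%:Z %| ffact_step n q k)%Z.
Proof.
move=> co_mq dvd_m_fact.
have [u [v uv1]] := Bezoutz m%:Z q%:Z.
rewrite /gcdz /= (eqP co_mq) in uv1.
set N := ((n * v) %% m%:Z)%Z.
have N_ge0 : 0 <= N by apply: modz_ge0; rewrite eqz_nat -lt0n;
  apply: dvdn_gt0 dvd_m_fact; exact: fact_gt0.
have dvd_N : (m%:Z %| \prod_(i < k) (N * q%:Z - (i * q)%N%:Z))%Z.
  have -> : \prod_(i < k) (N * q%:Z - (i * q)%N%:Z) =
      q%:Z ^+ k * \prod_(i < k) (`|N|%N%:Z - i%:Z).
    rewrite -[X in q%:Z ^+ X](card_ord k) -prodr_const -big_split /=.
    by apply: eq_bigr => i _; rewrite gez0_abs // PoszM; ring.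
  apply/dvdz_mull/(dvdz_trans _ (fact_dvdz_prod_subn _ _)).
  by apply/dvdzP; have /dvdnP[d ->] := dvd_m_fact; exists d%:Z; rewrite PoszM.
rewrite -(rpredBr _ dvd_N) /ffact_step.
apply: (@dvdz_prodB _ k (fun i => n - (i * q)%N%:Z)
  (fun i => N * q%:Z - (i * q)%N%:Z)) => i _.
have -> : n - (i * q)%N%:Z - (N * q%:Z - (i * q)%N%:Z) =
  n * (1 - (u * m%:Z + v * q%:Z)) + n * (u * m%:Z) + (n * v - N) * q%:Z by ring.
rewrite uv1 subrr mulr0 add0r.
apply: rpredD; first by rewrite mulrA; apply/dvdz_mull/dvdzz.
by rewrite {1}(divz_eq (n * v) m%:Z) addrK mulrAC; apply/dvdz_mull/dvdzz.
Qed.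

Lemma fact_dvdz_ffact_step_expn (n : int) (q k : nat) : prime q ->
  exists e, ((k`!)%:Z %| ffact_step n q k * (q ^ e)%:Z)%Z.
Proof.
move=> q_prime; set e := logn q k`!; exists e.
have fact_split : k`! = (k`!`_q^' * q ^ e)%N by rewrite mulnC -p_part partnC ?fact_gt0.
rewrite {1}fact_split PoszM dvdz_mul2r; last first.
  by rewrite -lt0n expn_gt0 prime_gt0.
apply: dvdz_ffact_step; last exact: dvdn_part.
by rewrite coprime_sym prime_coprime // -p'natE //; exact: part_pnat.
Qed.

Lemma binr_divn (F : numFieldType) (n : int) (q k : nat) : (0 < q)%N ->
  (k`! * q ^ k)%:R * binr (n%:~R / q%:R : F) k = (ffact_step n q k)%:~R.
Proof.
move=> q_gt0; have q_neq0 : q%:R != 0 :> F by rewrite pnatr_eq0 -lt0n.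
rewrite /binr /ffact_step natrM mulrC mulrA mulfVK ?pnatr_eq0 -?lt0n ?fact_gt0 //.
rewrite natrX -[X in _ ^+ X](card_ord k) -prodr_const -big_split rmorph_prod.
by apply: eq_bigr => i _; rewrite /= intrB -pmulrn natrM; field.
Qed.

Section AdjoinInt.
Context {R : comNzRingType}.

Definition Zadjoin (z : R) : {pred R} :=
  fun x => `[< exists P : {poly int}, x = (map_poly intr P).[z] >].

Lemma Zadjoin_subring_closed z : subring_closed (Zadjoin z).
Proof.
split.
- by apply/asboolP; exists 1; rewrite rmorph1 hornerC.
- move=> _ _ /asboolP[P ->] /asboolP[Q ->]; apply/asboolP.
  by exists (P - Q); rewrite rmorphB hornerD hornerN.
- move=> _ _ /asboolP[P ->] /asboolP[Q ->]; apply/asboolP.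
  by exists (P * Q); rewrite rmorphM hornerM.
Qed.

HB.instance Definition _ z :=
  GRing.isSubringClosed.Build R (Zadjoin z) (Zadjoin_subring_closed z).

Lemma Zadjoin_id z : z \in Zadjoin z.
Proof. by apply/asboolP; exists 'X; rewrite map_polyX hornerX. Qed.

Lemma Zadjoin_power_sum (z x : R) (p : nat) : (0 < p)%N -> z ^+ p = 1 ->
  x \in Zadjoin z -> exists c : nat -> int, x = \sum_(i < p) (c i)%:~R * z ^+ i.
Proof.
move=> p_gt0 zp1 /asboolP[P ->].
exists (fun j => \sum_(i < size P | (i %% p)%N == j) P`_i).
rewrite (horner_coef_wide _ (size_poly _ _)).
pose r := fun i : 'I_(size P) => (Ordinal (ltn_pmod i p_gt0) : 'I_p).
rewrite (partition_big r xpredT) //=; apply: eq_bigr => j _.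
rewrite rmorph_sum /= mulr_suml; apply: eq_bigr => i /eqP <-.
have zi : z ^+ i = z ^+ (i %% p).
  by rewrite {1}(divn_eq i p) exprD mulnC exprM zp1 expr1n mul1r.
by rewrite coef_map /= zi.
Qed.

Definition adjoin_invn (S : {pred R}) (q : nat) : {pred R} :=
  fun x => `[< exists s, (q ^ s)%:R * x \in S >].

Lemma adjoin_invn_subring_closed (S : subringClosed R) q :
  subring_closed (adjoin_invn S q).
Proof.
split.
- by apply/asboolP; exists 0%N; rewrite mulr1 rpred1.
- move=> x y /asboolP[s Sx] /asboolP[t Sy]; apply/asboolP; exists (s + t)%N.
  rewrite expnD natrM mulrBr; apply: rpredB.
    by rewrite mulrAC mulrC rpredM ?rpred_nat.
  by rewrite -mulrA rpredM ?rpred_nat.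
- move=> x y /asboolP[s Sx] /asboolP[t Sy]; apply/asboolP; exists (s + t)%N.
  by rewrite expnD natrM mulrACA rpredM.
Qed.

HB.instance Definition _ (S : subringClosed R) q :=
  GRing.isSubringClosed.Build R (adjoin_invn S q) (adjoin_invn_subring_closed S q).

End AdjoinInt.

Definition cauchy_prod {R : pzSemiRingType} (f g : nat -> R) (k : nat) : R :=
  \sum_(i < k.+1) f i * g (k - i)%N.

Section ExpCongr.
Context {R : comNzRingType} (S : subringClosed R) (q : nat).

(* f = exp (x T / q) modulo q S, in divided-power form *)
Definition exp_congr (x : R) (f : nat -> R) : Prop :=
  exists2 b : nat -> R, (forall k, b k \in S) &
    forall k, (k`! * q ^ k)%:R * f k = x ^+ k + q%:R * b k.

Lemma exp_congr1 : exp_congr 0 (fun k => (k == 0%N)%:R).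
Proof.
exists (fun=> 0) => [k|[|k]]; first exact: rpred0.
  by rewrite mulr1 mulr0 addr0.
by rewrite mulr0 mulr0 expr0n addr0.
Qed.

Lemma exp_congr_cauchy x y f g : x \in S -> y \in S ->
  exp_congr x f -> exp_congr y g ->
  exp_congr (x + y) (cauchy_prod f g).
Proof.
move=> Sx Sy [b Sb fE] [c Sc gE].
exists (fun k => \sum_(i < k.+1) (b i * y ^+ (k - i) + x ^+ i * c (k - i)%N
                                  + q%:R * (b i * c (k - i)%N)) *+ 'C(k, i)).
  move=> k; apply: rpred_sum => i _.
  by rewrite rpredMn ?rpredD ?rpredM ?rpredX ?rpred_nat.
move=> k; rewrite /cauchy_prod [x + y]addrC exprDn mulr_sumr mulr_sumr -big_split /=.
apply: eq_bigr => i _; have le_ik : (i <= k)%N by rewrite -ltnS.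
have -> : (k`! * q ^ k)%N = ('C(k, i) * ((i`! * q ^ i) * ((k - i)`! * q ^ (k - i))))%N.
  have qk : (q ^ k = q ^ i * q ^ (k - i))%N by rewrite -expnD subnKC.
  by rewrite qk -(bin_fact le_ik); ring.
rewrite mulnC natrM mulr_natr mulrnAl natrM mulrACA fE gE mulrnAr -mulrnDl.
congr (_ *+ _); ring.
Qed.

End ExpCongr.

Section BinomialFactor.
Context {F : numFieldType} (S : subringClosed F) (n : int) (q : nat) (c : F).
Hypothesis Sc : c \in S.

Lemma exp_congr_binr : (0 < q)%N ->
  exp_congr S q (- (n%:~R * c)) (fun k => binr (n%:~R / q%:R) k * (- c) ^+ k).
Proof.
move=> q_gt0.
exists (fun k => ((ffact_step n q k - n ^+ k) %/ q%:Z)%Z%:~R * (- c) ^+ k).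
  by move=> k; rewrite rpredM ?rpred_int ?rpredX ?rpredN.
move=> k; set M := (_ %/ _)%Z.
have ffactE : ffact_step n q k = n ^+ k + M * q%:Z.
  by rewrite divzK ?dvdz_ffact_stepB // addrC subrK.
rewrite mulrA binr_divn // ffactE intrD intrM rmorphXn /= -pmulrn -mulrN exprMn.
ring.
Qed.

Lemma binr_adjoin_invn k : prime q ->
  binr (n%:~R / q%:R) k * (- c) ^+ k \in adjoin_invn S q.
Proof.
move=> q_prime; have [e /dvdzP[M ffactE]] := @fact_dvdz_ffact_step_expn n q k q_prime.
apply/asboolP; exists (k + e)%N.
have fact_neq0 : (k`!)%:R != 0 :> F by rewrite pnatr_eq0 -lt0n fact_gt0.
rewrite mulrA; suff -> : (q ^ (k + e))%:R * binr (n%:~R / q%:R) k = M%:~R :> F.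
  by rewrite rpredM ?rpred_int ?rpredX ?rpredN.
apply: (mulfI fact_neq0).
transitivity ((k`! * q ^ k)%:R * binr (n%:~R / q%:R) k * (q ^ e)%:R : F).
  by rewrite expnD !natrM; ring.
rewrite binr_divn ?prime_gt0 //.
have := congr1 (intr : int -> F) ffactE; rewrite !rmorphM /= -!pmulrn => ->.
exact: mulrC.
Qed.

End BinomialFactor.

Lemma cauchy_prod_sum (R : comPzSemiRingType) (f g : nat -> R) (x : R) K :
  \sum_(k < K) cauchy_prod f g k * x ^+ k =
  \sum_(i < K) f i * x ^+ i * \sum_(j < K - i) g j * x ^+ j.
Proof.
elim: K => [|K IHK]; first by rewrite !big_ord0.
rewrite big_ord_recr /= IHK.
have step (i : 'I_K.+1) : f i * x ^+ i * \sum_(j < K.+1 - i) g j * x ^+ j =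
    f i * x ^+ i * \sum_(j < K - i) g j * x ^+ j + f i * g (K - i)%N * x ^+ K.
  have le_iK : (i <= K)%N by rewrite -ltnS.
  rewrite subSn // big_ord_recr /= mulrDr; congr (_ + _).
  by rewrite mulrACA -exprD subnKC // mulrAC.
rewrite (eq_bigr _ (fun i _ => step i)) big_split /= big_ord_recr /= subnn.
by rewrite big_ord0 mulr0 addr0 /cauchy_prod mulr_suml.
Qed.

Lemma ler_sum_widen {R : numDomainType} {F : nat -> R} {N M : nat} :
  (N <= M)%N -> (forall i, 0 <= F i) -> \sum_(i < N) F i <= \sum_(i < M) F i.
Proof.
move=> le_NM F_ge0; rewrite (big_ord_widen M F le_NM).
by rewrite [leRHS](bigID (fun i : 'I_M => (i < N)%N)) /= lerDl sumr_ge0.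
Qed.

Section RisingBinomial.
Context {R : realFieldType}.
Implicit Types (a b : R) (k : nat).

(* the coefficient of T^k in (1 - T)^-a *)
Definition risebin a k : R := (\prod_(i < k) (a + i%:R)) / (k`!)%:R.

Lemma risebin0 a : risebin a 0 = 1.
Proof. by rewrite /risebin big_ord0 fact0 divr1. Qed.

Lemma risebin0n k : risebin 0 k = (k == 0%N)%:R.
Proof.
case: k => [|k]; first exact: risebin0.
by rewrite /risebin big_ord_recl /= add0r !mul0r.
Qed.

Lemma risebin_ge0 a k : 0 <= a -> 0 <= risebin a k.
Proof.
move=> a_ge0; rewrite /risebin divr_ge0 ?ler0n //.
by apply: prodr_ge0 => i _; rewrite addr_ge0 ?ler0n.
Qed.

Lemma risebinS a k : risebin a k.+1 * k.+1%:R = risebin a k * (a + k%:R).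
Proof.
rewrite /risebin big_ord_recr /= factS natrM.
have fact_neq0 : (k`!)%:R != 0 :> R by rewrite pnatr_eq0 -lt0n fact_gt0.
by field; rewrite fact_neq0 nat1r pnatr_eq0.
Qed.

Lemma risebin_pascal a k : risebin (a + 1) k.+1 = risebin a k.+1 + risebin (a + 1) k.
Proof.
set X := \prod_(i < k) (a + 1 + i%:R).
have prodS : \prod_(i < k.+1) (a + i%:R) = a * X.
  rewrite big_ord_recl addr0; congr (_ * _); apply: eq_bigr => i _.
  by rewrite /bump /= -natr1 [in RHS]addrAC addrA.
have fact_neq0 : (k`!)%:R != 0 :> R by rewrite pnatr_eq0 -lt0n fact_gt0.
have k1_neq0 : k%:R + 1 != 0 :> R by rewrite natr1 pnatr_eq0.
rewrite /risebin big_ord_recr /= -/X prodS factS natrM -natr1.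
by field; rewrite fact_neq0 k1_neq0.
Qed.

Lemma risebin_vandermonde a b k :
  cauchy_prod (risebin a) (risebin b) k = risebin (a + b) k.
Proof.
elim: k => [|k IHk].
  by rewrite /cauchy_prod big_ord1 !risebin0 mulr1.
apply: (@mulIf _ k.+1%:R); first by rewrite pnatr_eq0.
rewrite risebinS -IHk.
have split_weight : cauchy_prod (risebin a) (risebin b) k.+1 * k.+1%:R =
  \sum_(i < k.+2) risebin a i * i%:R * risebin b (k.+1 - i)%N +
  \sum_(i < k.+2) risebin a i * (risebin b (k.+1 - i)%N * (k.+1 - i)%N%:R).
  rewrite /cauchy_prod mulr_suml -big_split /=; apply: eq_bigr => i _.
  have le_ik : (i <= k.+1)%N by rewrite -ltnS.
  have -> : k.+1%:R = i%:R + (k.+1 - i)%N%:R :> R by rewrite -natrD subnKC.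
  ring.
rewrite split_weight big_ord_recl /= mulr0 mul0r add0r.
rewrite [X in _ + X]big_ord_recr /= subnn !mulr0 addr0.
rewrite /cauchy_prod mulr_suml -big_split /=; apply: eq_bigr => i _.
have le_ik : (i <= k)%N by rewrite -ltnS.
by rewrite /bump /= add1n subSS risebinS (subSn le_ik) risebinS natrB //; ring.
Qed.

Lemma risebin_addn_le a m i : 0 <= a ->
  risebin a (m + i) <= risebin a m * risebin (a + m%:R) i.
Proof.
move=> a_ge0; rewrite /risebin big_split_ord /=.
have -> : \prod_(j < i) (a + (m + j)%N%:R) = \prod_(j < i) (a + m%:R + j%:R).
  by apply: eq_bigr => j _; rewrite natrD addrA.
set X := \prod_(j < m) _; set Y := \prod_(j < i) _.
have X_ge0 : 0 <= X by apply: prodr_ge0 => j _; rewrite addr_ge0 ?ler0n.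
have Y_ge0 : 0 <= Y by apply: prodr_ge0 => j _; rewrite !addr_ge0 ?ler0n.
rewrite mulrACA -invfM -natrM ler_wpM2l ?mulr_ge0 //.
rewrite lef_pV2 ?posrE ?ltr0n ?muln_gt0 ?fact_gt0 // ler_nat.
by rewrite -(bin_fact (leq_addr i m)) addKn leq_pmull // bin_gt0 leq_addr.
Qed.

Lemma normr_binrN a k : 0 <= a -> `|binr (- a) k| = risebin a k.
Proof.
move=> a_ge0; rewrite /binr /risebin normrM normfV normr_nat normr_prod.
congr (_ / _); apply: eq_bigr => i _.
by rewrite -opprD normrN ger0_norm // addr_ge0 ?ler0n.
Qed.

Lemma normr_binr_le (r : R) k : `|binr r k| <= risebin `|r| k.
Proof.
rewrite /binr /risebin normrM normfV normr_nat ler_wpM2r ?invr_ge0 ?ler0n //.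
rewrite normr_prod; apply: ler_prod => i _; rewrite normr_ge0 /=.
by rewrite (le_trans (ler_normB _ _)) // normr_nat.
Qed.

End RisingBinomial.

Section RisingBinomialSum.
Context {R : realFieldType}.
Implicit Types (a b x : R) (N : nat).

Definition risebin_sum a x N : R := \sum_(j < N) risebin a j * x ^+ j.

Lemma risebin_sum_ge0 a x N : 0 <= a -> 0 <= x -> 0 <= risebin_sum a x N.
Proof.
by move=> a_ge0 x_ge0; apply: sumr_ge0 => j _; rewrite mulr_ge0 ?risebin_ge0 ?exprn_ge0.
Qed.

Lemma risebin_sum_mul a b x N M : 0 <= a -> 0 <= b -> 0 <= x ->
  risebin_sum a x N * risebin_sum b x M <= risebin_sum (a + b) x (N + M).
Proof.
move=> a_ge0 b_ge0 x_ge0.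
have term_ge0 c j : 0 <= c -> 0 <= risebin c j * x ^+ j.
  by move=> c_ge0; rewrite mulr_ge0 ?risebin_ge0 ?exprn_ge0.
have -> : risebin_sum (a + b) x (N + M) =
    \sum_(k < N + M) cauchy_prod (risebin a) (risebin b) k * x ^+ k.
  by apply: eq_bigr => k _; rewrite risebin_vandermonde.
rewrite cauchy_prod_sum /risebin_sum mulr_suml.
pose G i := risebin a i * x ^+ i * \sum_(j < N + M - i) risebin b j * x ^+ j.
apply: (@le_trans _ _ (\sum_(i < N) G i)); last first.
  apply: ler_sum_widen (leq_addr M N) _ => i.
  by rewrite /G mulr_ge0 ?term_ge0 // sumr_ge0 // => j _; exact: term_ge0.
apply: ler_sum => i _; rewrite ler_wpM2l ?term_ge0 //.
by apply: (ler_sum_widen _ (fun j => term_ge0 b j b_ge0)); have := ltn_ord i; lia.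
Qed.

Lemma risebin_sum_exp a x N j : 0 <= a -> 0 <= x ->
  risebin_sum a x N ^+ j.+1 <= risebin_sum (j.+1%:R * a) x (j.+1 * N).
Proof.
move=> a_ge0 x_ge0; elim: j => [|j IHj]; first by rewrite expr1 mul1r mul1n.
rewrite exprS mulrC mulSn addnC -[j.+2%:R]natr1 mulrDl mul1r.
apply: (le_trans (y := risebin_sum (j.+1%:R * a) x (j.+1 * N) * risebin_sum a x N)).
  by rewrite ler_wpM2r ?risebin_sum_ge0.
by rewrite risebin_sum_mul ?mulr_ge0 ?ler0n.
Qed.

Lemma risebin_sum_pascal a x N :
  risebin_sum a x N.+1 - (1 - x) * risebin_sum (a + 1) x N.+1 =
  risebin (a + 1) N * x ^+ N.+1.
Proof.
elim: N => [|N IHN].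
  by rewrite /risebin_sum !big_ord1 !risebin0 expr1; ring.
rewrite /risebin_sum big_ord_recr /= [X in _ - (_ * X)]big_ord_recr /=.
rewrite -/(risebin_sum a x N.+1) -/(risebin_sum (a + 1) x N.+1).
have -> : forall A B C D : R, A + C - (1 - x) * (B + D) =
  (A - (1 - x) * B) + C - (1 - x) * D by move=> *; ring.
by rewrite IHN risebin_pascal !exprS; ring.
Qed.

Lemma risebin_sum_succ_le a x N : 0 <= a -> 0 <= x ->
  (1 - x) * risebin_sum (a + 1) x N <= risebin_sum a x N.
Proof.
move=> a_ge0 x_ge0; case: N => [|N]; first by rewrite /risebin_sum !big_ord0 mulr0.
by rewrite -subr_ge0 risebin_sum_pascal mulr_ge0 ?exprn_ge0 ?risebin_ge0 ?addr_ge0.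
Qed.

Lemma risebin_sum_nat_le x (u : nat) N : 0 <= x < 1 ->
  risebin_sum u%:R x N * (1 - x) ^+ u <= 1.
Proof.
move=> /andP[x_ge0 x_lt1]; elim: u => [|u IHu].
  rewrite expr0 mulr1 /risebin_sum; case: N => [|N]; first by rewrite big_ord0.
  by rewrite big_ord_recl risebin0 mulr1 big1 ?addr0 // => i _; rewrite risebin0n mul0r.
rewrite exprSr mulrA -natr1 [_ * (1 - x)]mulrC; apply: le_trans IHu.
by rewrite mulrA ler_wpM2r ?exprn_ge0 ?risebin_sum_succ_le ?ler0n // subr_ge0 ltW.
Qed.

End RisingBinomialSum.

Lemma risebin_sum_le_powR (R : realType) (x : R) (u q N : nat) :
  (0 < q)%N -> 0 <= x < 1 ->
  risebin_sum (u%:R / q%:R) x N <= ((1 - x) `^ (u%:R / q%:R))^-1.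
Proof.
move=> q_gt0 /andP[x_ge0 x_lt1]; set a := u%:R / q%:R.
have a_ge0 : 0 <= a by rewrite divr_ge0 ?ler0n.
have qa : q%:R * a = u%:R by rewrite /a mulrCA mulfV ?mulr1 // pnatr_eq0 -lt0n.
have y_gt0 : 0 < (1 - x) `^ a by rewrite powR_gt0 // subr_gt0.
have yq : ((1 - x) `^ a) ^+ q = (1 - x) ^+ u.
  by rewrite -powR_mulrn ?powR_ge0 // -powRrM mulrC qa powR_mulrn // subr_ge0 ltW.
rewrite -(ler_pXn2r q_gt0) ?nnegrE ?risebin_sum_ge0 ?invr_ge0 ?(ltW y_gt0) //.
have pow_le : risebin_sum a x N ^+ q <= risebin_sum u%:R x (q * N).
  by have := risebin_sum_exp a x N q.-1 a_ge0 x_ge0; rewrite prednK // qa.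
have nat_le : risebin_sum u%:R x (q * N) <= ((1 - x) ^+ u)^-1.
  by rewrite -div1r ler_pdivlMr ?exprn_gt0 ?subr_gt0 // risebin_sum_nat_le // x_ge0.
by rewrite exprVn yq (le_trans pow_le nat_le).
Qed.

Lemma risebin_tail_le (R : realType) (x : R) (u q k N : nat) : (0 < q)%N -> 0 <= x < 1 ->
  \sum_(i < N) risebin (u%:R / q%:R) (k + i) * x ^+ (k + i)
  <= risebin (u%:R / q%:R) k * x ^+ k / (1 - x) `^ (u%:R / q%:R + k%:R).
Proof.
move=> q_gt0 x01; have /andP[x_ge0 _] := x01; set a := u%:R / q%:R.
have a_ge0 : 0 <= a by rewrite divr_ge0 ?ler0n.
have head_ge0 : 0 <= risebin a k * x ^+ k by rewrite mulr_ge0 ?risebin_ge0 ?exprn_ge0.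
have ak : a + k%:R = (u + k * q)%N%:R / q%:R.
  by rewrite natrD natrM /a; field; rewrite pnatr_eq0 -lt0n.
apply: (@le_trans _ _ (risebin a k * x ^+ k * risebin_sum (a + k%:R) x N)).
  rewrite /risebin_sum mulr_sumr; apply: ler_sum => i _.
  by rewrite exprD [leRHS]mulrACA ler_wpM2r ?risebin_addn_le ?mulr_ge0 ?exprn_ge0.
by rewrite ler_wpM2l // ak risebin_sum_le_powR.
Qed.

Lemma real_series_dom_cvg (R : realType) (r w : nat -> R) (B : R) :
  (forall j, `|r j| <= w j) -> (forall N, \sum_(j < N) w j <= B) -> cvgn (series r).
Proof.
move=> rw wB; apply: normed_cvg; apply: nondecreasing_is_cvgn.
  by apply: nondecreasing_series => j _ _; rewrite normr_ge0.
exists B => _ [N _ <-]; apply: le_trans (wB N).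
by rewrite /normed_series_of /series /= big_mkord; apply: ler_sum => j _.
Qed.

Section ComplexSeries.
Context {R : realType}.
Local Open Scope complex_scope.
Local Open Scope classical_set_scope.
Implicit Types (z : cplx R) (u : nat -> cplx R).

Lemma normc_ge0 z : 0 <= Normc.normc z.
Proof. by case: z => a b; rewrite /= sqrtr_ge0. Qed.

Lemma normcX z k : Normc.normc (z ^+ k) = Normc.normc z ^+ k.
Proof.
elim: k => [|k IHk]; first by rewrite !expr0 Normc.normc1.
by rewrite !exprS Normc.normcM IHk.
Qed.

Lemma normc_sum (I : Type) (r : seq I) (P : pred I) (F : I -> cplx R) :
  Normc.normc (\sum_(i <- r | P i) F i) <= \sum_(i <- r | P i) Normc.normc (F i).
Proof. exact: (@ler_norm_sum _ (Rcomplex R)). Qed.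

Lemma normc_real (y : R) : Normc.normc (y%:C : cplx R) = `|y|.
Proof. by rewrite /= expr0n /= addr0 sqrtr_sqr. Qed.

Lemma normr_complexE z : `|z| = (Normc.normc z)%:C.
Proof. by case: z => a b; rewrite normc_def. Qed.

Lemma normc_Re z : `|complex.Re z| <= Normc.normc z.
Proof.
by case: z => a b; rewrite /= -sqrtr_sqr ler_sqrt ?addr_ge0 ?sqr_ge0 // lerDl sqr_ge0.
Qed.

Lemma normc_Im z : `|complex.Im z| <= Normc.normc z.
Proof.
by case: z => a b; rewrite /= -sqrtr_sqr ler_sqrt ?addr_ge0 ?sqr_ge0 // lerDr sqr_ge0.
Qed.

Lemma normc_le_Re_Im (a b : R) : Normc.normc (a +i* b : cplx R) <= `|a| + `|b|.
Proof.
rewrite /= -[leRHS]ger0_norm ?addr_ge0 // -sqrtr_sqr ler_sqrt ?sqr_ge0 //.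
rewrite -[a ^+ 2]real_normK ?num_real // -[b ^+ 2]real_normK ?num_real // sqrrD.
have := mulr_ge0 (normr_ge0 a) (normr_ge0 b); rewrite mulr2n; lra.
Qed.

Lemma cvg_complex (x y : nat -> R) (a b : R) :
  x n @[n --> \oo] --> a -> y n @[n --> \oo] --> b ->
  (x n +i* y n : cplx R) @[n --> \oo] --> (a +i* b : cplx R).
Proof.
move=> /cvgrPdist_lt x_cvg /cvgrPdist_lt y_cvg; apply/cvgrPdist_lt => -[e e0].
rewrite ltcE /= => /andP[/eqP e00 e_gt0]; subst e0.
have e2_gt0 : 0 < e / 2 by rewrite divr_gt0.
apply: filterS2 (x_cvg _ e2_gt0) (y_cvg _ e2_gt0) => n xn yn.
rewrite normr_complexE -[e +i* 0]/(e%:C) ltcR.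
by apply: le_lt_trans (normc_le_Re_Im _ _) _; rewrite [e]splitr ltrD.
Qed.

Lemma series_complex u N :
  series u N = series (@complex.Re R \o u) N +i* series (@complex.Im R \o u) N.
Proof.
rewrite /series /= !big_mkord; elim: N => [|N IHN]; first by rewrite !big_ord0.
by rewrite !big_ord_recr /= IHN; case: (u N).
Qed.

Lemma series_dom_cvg u (w : nat -> R) (B : R) :
  (forall j, Normc.normc (u j) <= w j) -> (forall N, \sum_(j < N) w j <= B) ->
  cvgn (series u).
Proof.
move=> uw wB.
have /cvg_ex[a Re_cvg] : cvgn (series (@complex.Re R \o u)).
  by apply: real_series_dom_cvg wB => j; apply: le_trans (uw j); exact: normc_Re.
have /cvg_ex[b Im_cvg] : cvgn (series (@complex.Im R \o u)).
  by apply: real_series_dom_cvg wB => j; apply: le_trans (uw j); exact: normc_Im.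
apply/cvg_ex; exists (a +i* b); rewrite (funext (series_complex u)).
exact: cvg_complex.
Qed.

Lemma series_addn_sub u K N :
  series u (K + N) - \sum_(j < K) u j = \sum_(i < N) u (K + i)%N.
Proof. by rewrite /series /= big_mkord big_split_ord /= addrAC subrr add0r. Qed.

Lemma lim_series_sub_le u (S : cplx R) (B : R) (K : nat) : cvgn (series u) ->
  (forall N, Normc.normc (series u (K + N) - S) <= B) ->
  Normc.normc (limn (series u) - S) <= B.
Proof.
move=> u_cvg B_bound; apply/ler_addgt0Pr => e e_gt0.
have /cvgrPdist_lt/(_ e%:C) := u_cvg; rewrite ltcR => /(_ e_gt0) near_lim.
have near_both :
    \forall m \near \oo, `|limn (series u) - series u m| < e%:C /\ (K <= m)%N.
  by apply: filterS2 near_lim (nbhs_infty_ge K) => m.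
have [N [limN KN]] := filter_ex near_both.
rewrite -(subrK (series u N) (limn _)) -addrA addrC.
apply: le_trans (le_normcD _ _) _; apply: lerD; first by rewrite -(subnKC KN).
by move: limN; rewrite normr_complexE ltcR => /ltW.
Qed.

End ComplexSeries.

Section Majorants.
Context {R : realType}.
Local Open Scope complex_scope.

Lemma normc_binom_series_le (r : R) (c : cplx R) k : Normc.normc c = 1 ->
  Normc.normc (binom_series R r%:C c k) <= risebin `|r| k.
Proof.
move=> c1; rewrite /binom_series Normc.normcM normcX normcN c1 expr1n mulr1.
have -> : binr (r%:C : cplx R) k = (binr r k)%:C.
  rewrite /binr fmorph_div rmorph_prod rmorph_nat; congr (_ / _).
  by apply: eq_bigr => i _; rewrite rmorphB rmorph_nat.
by rewrite normc_real normr_binr_le.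
Qed.

Lemma normc_ps_mul_le (f g : nat -> cplx R) (a b : R) : 0 <= a -> 0 <= b ->
  (forall k, Normc.normc (f k) <= risebin a k) ->
  (forall k, Normc.normc (g k) <= risebin b k) ->
  forall k, Normc.normc (ps_mul R f g k) <= risebin (a + b) k.
Proof.
move=> a_ge0 b_ge0 f_le g_le k; rewrite -risebin_vandermonde.
apply: le_trans (normc_sum _ _ _ _) _; apply: ler_sum => i _.
by rewrite Normc.normcM ler_pM ?normc_ge0.
Qed.

End Majorants.

Lemma sum_intr_abszE (R : pzRingType) (I : finType) (P : pred I) (n : I -> int) :
  (forall i, P i -> 0 <= n i) ->
  \sum_(i | P i) (n i)%:~R = (\sum_(i | P i) `|n i|)%N%:R :> R.
Proof.
move=> n_ge0; rewrite natr_sum; apply: eq_bigr => i Pi.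
by rewrite -[in LHS](gez0_abs (n_ge0 i Pi)) -pmulrn.
Qed.

Section Fser.
Variables (R : realType) (p q : nat) (n : 'I_p -> int).
Local Open Scope complex_scope.

Lemma zetaX j :
  zeta R p ^+ j = Complex (cos (j%:R * (2 * pi / p%:R))) (sin (j%:R * (2 * pi / p%:R))).
Proof.
elim: j => [|j IHj]; first by rewrite expr0 mul0r cos0 sin0.
rewrite exprS IHj /zeta; set t := 2 * pi / p%:R.
rewrite -[j.+1%:R]nat1r mulrDl mul1r cosD sinD.
by simpc; congr Complex; ring.
Qed.

Lemma zeta_expr_order : (0 < p)%N -> zeta R p ^+ p = 1.
Proof.
move=> p_gt0; rewrite zetaX.
have -> : p%:R * (2 * pi / p%:R) = pi *+ 2 :> R.
  by rewrite mulrCA mulfV ?pnatr_eq0 -?lt0n // mulr1 mulr_natl.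
by rewrite cos2pi sin2pi.
Qed.

Lemma normc_zetaX j : Normc.normc (zeta R p ^+ j) = 1.
Proof. by rewrite normcX /= cos2Dsin2 sqrtr1 expr1n. Qed.

Local Notation Zzeta := (Zadjoin (zeta R p)).

Lemma Fser_adjoin_invn s k : prime q -> Fser R p q n s k \in adjoin_invn Zzeta q.
Proof.
move=> q_prime; rewrite /Fser.
apply: (big_ind (fun f : nat -> cplx R => forall k, f k \in adjoin_invn Zzeta q)).
- by move=> j; rewrite rpred_nat.
- by move=> f g f_in g_in j; apply: rpred_sum => i _; rewrite rpredM.
- by move=> a _ j; rewrite binr_adjoin_invn ?rpredX ?Zadjoin_id.
Qed.

Lemma Fser_exp_congr s : (0 < q)%N ->
  exp_congr Zzeta q (- \sum_(a < p | (0 < a)%N) (n a)%:~R * zeta R p ^+ (s * a))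
    (Fser R p q n s).
Proof.
move=> q_gt0; rewrite /Fser -sumrN.
apply: proj2 (big_ind2 (fun f x => x \in Zzeta /\ exp_congr Zzeta q x f) _ _ _).
- by split; [exact: rpred0 | exact: exp_congr1].
- by move=> f x g y [Zx fx] [Zy gy]; split; [exact: rpredD | exact: exp_congr_cauchy].
- move=> a _; have Zc : zeta R p ^+ (s * a) \in Zzeta by rewrite rpredX ?Zadjoin_id.
  by split; [rewrite rpredN rpredM ?rpred_int | exact: exp_congr_binr].
Qed.

Local Notation abs_weight := ((\sum_(a < p | (0 < a)%N) `|n a|)%N%:R / q%:R).

Lemma normc_Fser_le s k : Normc.normc (Fser R p q n s k) <= risebin abs_weight k.
Proof.
rewrite /Fser; move: k; apply: (big_ind2 (fun f (u : nat) =>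
  forall k, Normc.normc (f k) <= risebin (u%:R / q%:R) k)).
- move=> k; rewrite mul0r risebin0n /ps_one -(rmorph_nat (real_complex R)).
  by rewrite normc_real ger0_norm ?ler0n.
- move=> f u g v f_le g_le k; rewrite natrD mulrDl.
  by apply: normc_ps_mul_le; rewrite ?divr_ge0 ?ler0n.
- move=> a _ k; have -> : (n a)%:~R / q%:R = ((n a)%:~R / q%:R : R)%:C.
    by rewrite fmorph_div rmorph_nat rmorph_int.
  apply: le_trans (normc_binom_series_le _ _ _ (normc_zetaX _)) _.
  by rewrite normrM normfV normr_nat -intr_norm -abszE -pmulrn.
Qed.

Lemma normc_Fser_term_le s (t : cplx R) j :
  Normc.normc (Fser R p q n s j * t ^+ j) <=
  risebin abs_weight j * Normc.normc t ^+ j.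
Proof. by rewrite Normc.normcM normcX ler_wpM2r ?exprn_ge0 ?normc_ge0 ?normc_Fser_le. Qed.

Lemma Fser_series_cvg s (t : cplx R) : (0 < q)%N -> Normc.normc t < 1 ->
  cvgn (series (fun k => Fser R p q n s k * t ^+ k)).
Proof.
move=> q_gt0 t_lt1; apply: series_dom_cvg (normc_Fser_term_le s t) _ => N.
by apply: risebin_sum_le_powR; rewrite ?normc_ge0.
Qed.

Lemma Fser_series_tail_le s (t : cplx R) k : (0 < q)%N -> Normc.normc t < 1 ->
  Normc.normc (limn (series (fun j => Fser R p q n s j * t ^+ j))
               - \sum_(j < k) Fser R p q n s j * t ^+ j)
  <= risebin abs_weight k * Normc.normc t ^+ k
       / (1 - Normc.normc t) `^ (abs_weight + k%:R).
Proof.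
move=> q_gt0 t_lt1.
apply: (@lim_series_sub_le _ _ _ _ k (Fser_series_cvg s t q_gt0 t_lt1)) => N.
rewrite series_addn_sub; apply: le_trans (normc_sum _ _ _ _) _.
apply: le_trans (risebin_tail_le _ _ _ _ _ _ q_gt0 _); last by rewrite normc_ge0.
by apply: ler_sum => i _; exact: normc_Fser_term_le.
Qed.

End Fser.

Theorem proposition3 (R : realType) (p q : nat) (n : 'I_p -> int) :
  prime p -> prime q -> odd p -> odd q -> p != q ->
  (* (a) *)
  (forall k : nat, exists (a : cplx R) (s : nat),
     inZzeta R p a /\ Fser R p q n 1 k = a / (q ^ s)%:R) /\
  (* (b) *)
  (forall k : nat, exists ak : cplx R,
     inZzeta R p ak /\ Fser R p q n 1 k = ak / (k`! * q ^ k)%:R /\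
     exists b : cplx R, inZzeta R p b /\
       ak - (- \sum_(a < p | (0 < a)%N) (n a)%:~R * zeta R p ^+ a) ^+ k
         = q%:R * b) /\
  (* (c) *)
  (forall (s : 'I_p) (t : cplx R), (0 < s)%N -> Normc.normc t < 1 ->
     cvgn (series (fun k => Fser R p q n s k * t ^+ k)) /\
     ((forall a : 'I_p, (0 < a)%N -> 0 <= n a <= q%:Z) ->
      let m : R := (\sum_(a < p | (0 < a)%N) (n a)%:~R) / q%:R in
      forall k : nat,
        Normc.normc (limn (series (fun j => Fser R p q n s j * t ^+ j))
               - \sum_(j < k.+1) Fser R p q n s j * t ^+ j)
        <= `|binr (- m) k.+1| * Normc.normc t ^+ k.+1
             / (1 - Normc.normc t) `^ (m + k.+1%:R))).
Proof.
move=> p_prime q_prime _ _ _.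
have [p_gt0 q_gt0] := (prime_gt0 p_prime, prime_gt0 q_prime).
have inZ x : x \in Zadjoin (zeta R p) -> inZzeta R p x.
  exact: Zadjoin_power_sum _ _ _ p_gt0 (zeta_expr_order R p p_gt0).
have pos_neq0 (m : nat) : (0 < m)%N -> m%:R != 0 :> cplx R by rewrite pnatr_eq0 -lt0n.
split; [|split].
- move=> k; have /asboolP[s Zs] := Fser_adjoin_invn R p q n 1 k q_prime.
  exists (Fser R p q n 1 k * (q ^ s)%:R), s.
  by rewrite mulfK ?pos_neq0 ?expn_gt0 ?q_gt0 // mulrC; split; first exact: inZ.
- move=> k; have [b Zb FE] := Fser_exp_congr R p q n 1 q_gt0.
  have -> : \sum_(a < p | (0 < a)%N) (n a)%:~R * zeta R p ^+ a =
            \sum_(a < p | (0 < a)%N) (n a)%:~R * zeta R p ^+ (1 * a).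
    by apply: eq_bigr => a _; rewrite mul1n.
  have Zx : - \sum_(a < p | (0 < a)%N) (n a)%:~R * zeta R p ^+ (1 * a)
             \in Zadjoin (zeta R p).
    by rewrite rpredN rpred_sum // => a _; rewrite rpredM ?rpred_int ?rpredX ?Zadjoin_id.
  exists ((k`! * q ^ k)%:R * Fser R p q n 1 k).
  split; first by apply: inZ; rewrite FE rpredD ?rpredX ?rpredM ?rpred_nat.
  split; first by rewrite mulrC mulKf ?pos_neq0 ?muln_gt0 ?fact_gt0 ?expn_gt0 ?q_gt0.
  by exists (b k); split; [exact: inZ | rewrite FE addrAC subrr add0r].
- move=> s t _ t_lt1; split; first exact: Fser_series_cvg.
  move=> n_bound m k; have n_ge0 (a : 'I_p) : (0 < a)%N -> 0 <= n a.
    by move=> /n_bound/andP[].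
  rewrite /m sum_intr_abszE // normr_binrN ?divr_ge0 ?ler0n //.
  exact: Fser_series_tail_le.
Qed.
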